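(* If $A$ is a polyomino with $n$ tiles and $h$ holes, then $p_o(A)\ge 2\lceil 2\sqrt{n+h}\,\rceil$.
   Context: A polyomino is a finite union of closed unit squares (tiles) of the square lattice, any two meeting (if at all) in a whole edge, whose interior is connected. Its holes are the bounded connected components of its complement in the plane. The outer perimeter of $A$ is the set of unit edges on the topological boundary of $A$ that do not bound a hole; $p_o(A)$ is its number of edges. *)

From HB Require Import structures.
From mathcomp Require Import all_boot all_order all_algebra finmap.
From mathcomp Require Import boolp reals.
Set Implicit Arguments. Unset Strict Implicit. Unset Printing Implicit Defensive.
Import Order.TTheory GRing.Theory Num.Theory.
Local Open Scope fset_scope.

(* A cell (x, y) : int * int denotes the closed unit square [x,x+1] x [y,y+1]. *)
Definition cell := (int * int)%type.

Definition nbr (c : cell) (d : 'I_4) : cell :=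
  match val d with
  | 0 => (c.1 + 1, c.2)%R
  | 1 => (c.1 - 1, c.2)%R
  | 2 => (c.1, c.2 + 1)%R
  | _ => (c.1, c.2 - 1)%R
  end.

Inductive conn (P : cell -> Prop) (a : cell) : cell -> Prop :=
  | conn_refl : P a -> conn P a a
  | conn_step b d : conn P a b -> P (nbr b d) -> conn P a (nbr b d).

(* A polyomino: a finite nonempty set of lattice tiles whose union has
   connected interior, i.e. the tiles are edge-connected. *)
Definition polyomino (A : {fset cell}) : Prop :=
  A != fset0 /\ forall a b, a \in A -> b \in A -> conn (fun c => c \in A) a b.

(* Empty (non-tile) cells.  Connected components of the complement of the
   union of tiles correspond to edge-connected components of empty cells. *)
Definition empty_cell (A : {fset cell}) (c : cell) : Prop := c \notin A.

Definition bounded_comp (A : {fset cell}) (c : cell) : Prop :=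
  exists R : nat, forall b, conn (empty_cell A) c b ->
    (`|b.1|%N + `|b.2|%N <= R)%N.

Definition outer_edge (A : {fset cell}) (c : cell) (d : 'I_4) : Prop :=
  c \in A /\ nbr c d \notin A /\ ~ bounded_comp A (nbr c d).

Definition outer_perimeter (A : {fset cell}) : nat :=
  \sum_(c <- A) #|[set d : 'I_4 | `[< outer_edge A c d >] ]|.

(* A has exactly h holes: there is a set of h cells, one in each bounded
   component of the complement (a system of distinct representatives). *)
Definition num_holes (A : {fset cell}) (h : nat) : Prop :=
  exists H : {fset cell},
    #|` H| = h /\
    (forall c, c \in H -> c \notin A /\ bounded_comp A c) /\
    (forall c c', c \in H -> c' \in H -> conn (empty_cell A) c c' -> c = c') /\
    (forall c, c \notin A -> bounded_comp A c ->
       exists2 c', c' \in H & conn (empty_cell A) c c').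

From HB Require Import structures.
From mathcomp Require Import all_boot all_order all_algebra finmap.
From mathcomp Require Import boolp reals.
From mathcomp Require Import zify lra.
Set Implicit Arguments. Unset Strict Implicit. Unset Printing Implicit Defensive.
Import Order.TTheory GRing.Theory Num.Theory.
Local Open Scope fset_scope.

(* Let a and b be the numbers of columns and rows met by A.  Scanning a row
   (column) of A in either direction, the last tile has an outer edge, since
   the straight ray beyond it avoids A and so leaves every bounded component;
   hence p_o(A) >= 2(a + b).  A ray along a row or column that misses A shows
   likewise that every hole lies in the a x b grid of rows and columns met by
   A, so n + h <= ab, and 2 sqrt(ab) <= a + b. *)

Lemma ceil_two_sqrt_le_add (R : realType) (N a b : nat) : (N <= a * b)%N ->
  (Num.ceil (2 * Num.sqrt (N%:R : R)) <= (a + b)%:Z)%R.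
Proof.
move=> le_N_ab; rewrite ceil_le_int -[(((a + b)%:Z)%:~R)%R]/((a + b)%:R : R)%R natrD.
have sqrt_ge0 := sqrtr_ge0 (N%:R : R).
have sqrt_sq : (Num.sqrt (N%:R : R) * Num.sqrt N%:R = N%:R)%R.
  by rewrite -expr2 sqr_sqrtr // ler0n.
have : (N%:R <= a%:R * b%:R :> R)%R by rewrite -natrM ler_nat.
have : (0 <= (a%:R - b%:R) ^+ 2 :> R)%R by exact: sqr_ge0.
have : (0 <= a%:R + b%:R :> R)%R by rewrite -natrD ler0n.
nra.
Qed.

Definition norm1 (c : cell) : nat := (`|c.1| + `|c.2|)%N.

(* The coordinate that stays constant when moving in direction [d]. *)
Definition line_coord (d : 'I_4) (c : cell) : int :=
  if (val d < 2)%N then c.2 else c.1.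

Lemma iter_nbr (d : 'I_4) j (c : cell) :
  iter j (nbr^~ d) c =
  match val d with
  | 0 => (c.1 + j%:Z, c.2)%R
  | 1 => (c.1 - j%:Z, c.2)%R
  | 2 => (c.1, c.2 + j%:Z)%R
  | _ => (c.1, c.2 - j%:Z)%R
  end.
Proof.
case: d => [[|[|[|[|k]]]] lt_d4] //=; elim: j => [|j IHj].
all: rewrite /= ?addr0 ?subr0; try by case: c.
all: by rewrite IHj /nbr /= -addn1 PoszD ?opprD addrA.
Qed.

Lemma line_coord_iter_nbr d j c :
  line_coord d (iter j (nbr^~ d) c) = line_coord d c.
Proof. by rewrite iter_nbr /line_coord; case: d => [[|[|[|[|k]]]] lt_d4]. Qed.

Lemma leq_iter_nbr_norm1 d j c : (j <= norm1 (iter j (nbr^~ d) c) + norm1 c)%N.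
Proof. by rewrite iter_nbr /norm1; case: d => [[|[|[|[|k]]]] lt_d4] /=; lia. Qed.

Lemma conn_iter_nbr (P : cell -> Prop) d c j :
  (forall i, P (iter i (nbr^~ d) c)) -> conn P c (iter j (nbr^~ d) c).
Proof.
move=> P_ray; elim: j => [|j IHj]; first exact: conn_refl (P_ray 0%N).
by rewrite iterS; apply: conn_step => //; apply: P_ray j.+1.
Qed.

Lemma ray_unbounded (A : {fset cell}) d c :
  (forall i, iter i (nbr^~ d) c \notin A) -> ~ bounded_comp A c.
Proof.
move=> ray_out [r bounded].
have := bounded _ (conn_iter_nbr (r + norm1 c).+1 ray_out).
by have := leq_iter_nbr_norm1 d (r + norm1 c).+1 c; rewrite /norm1; lia.
Qed.

Lemma exists_last_tile (A : {fset cell}) d c : c \in A ->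
  exists2 k, iter k (nbr^~ d) c \in A &
    forall j, iter j (nbr^~ d) (nbr (iter k (nbr^~ d) c) d) \notin A.
Proof.
move=> cA; set m := \max_(a <- A) norm1 a.
have ray_hits_A : exists k, iter k (nbr^~ d) c \in A by exists 0%N.
have ray_bounded k : iter k (nbr^~ d) c \in A -> (k <= m + norm1 c)%N.
  move=> kA; apply: leq_trans (leq_iter_nbr_norm1 d k c) _.
  by rewrite leq_add2r; apply: leq_bigmax_seq.
case: (ex_maxnP ray_hits_A ray_bounded) => k kA k_max.
exists k => // j; apply/negP => ray_hits_A_again.
by have := k_max (j + k.+1)%N; rewrite iterD iterS => /(_ ray_hits_A_again); lia.
Qed.

Lemma exists_outer_edge_on_line (A : {fset cell}) d c : c \in A ->
  exists2 c', outer_edge A c' d & line_coord d c' = line_coord d c.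
Proof.
case/(exists_last_tile d) => k kA ray_out.
exists (iter k (nbr^~ d) c); last exact: line_coord_iter_nbr.
by split; [|split; [exact: ray_out 0%N | exact: ray_unbounded ray_out]].
Qed.

Definition lines (A : {fset cell}) (d : 'I_4) : seq int :=
  undup [seq line_coord d c | c <- A].

Lemma mem_lines (A : {fset cell}) d c : c \in A -> line_coord d c \in lines A d.
Proof. by move=> cA; rewrite mem_undup map_f. Qed.

Lemma hole_mem_lines (A : {fset cell}) d c :
  bounded_comp A c -> line_coord d c \in lines A d.
Proof.
apply: contraPT => off_lines; apply: (ray_unbounded (d := d)) => i.
apply: contra off_lines => /(mem_lines d).
by rewrite line_coord_iter_nbr.
Qed.

Lemma size_lines_le_count (A : {fset cell}) d :
  (size (lines A d) <= count (fun c => `[< outer_edge A c d >]) A)%N.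
Proof.
rewrite -size_filter -(size_map (line_coord d)).
apply: uniq_leq_size; first exact: undup_uniq.
move=> y; rewrite mem_undup => /mapP [c cA ->].
have [c' edge_c' <-] := exists_outer_edge_on_line d cA.
rewrite map_f // mem_filter andbC; case: (edge_c') => -> _ /=.
exact/asboolP.
Qed.

Lemma outer_perimeterE (A : {fset cell}) :
  outer_perimeter A = (\sum_(d < 4) count (fun c => `[< outer_edge A c d >]) A)%N.
Proof.
rewrite /outer_perimeter; under eq_bigr do rewrite -sum1dep_card.
rewrite (exchange_big_dep predT) //=.
by apply: eq_bigr => d _; rewrite sum1_count.
Qed.

Lemma outer_perimeter_ge_lines (A : {fset cell}) :
  (2 * (size (lines A ord_max) + size (lines A ord0)) <= outer_perimeter A)%N.
Proof.
rewrite outer_perimeterE.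
apply: (@leq_trans (\sum_(d < 4) size (lines A d))); last first.
  by apply: leq_sum => d _; apply: size_lines_le_count.
by rewrite !big_ord_recl big_ord0 /lines /line_coord /=; lia.
Qed.

Lemma tiles_add_holes_le_grid (A : {fset cell}) h : num_holes A h ->
  (#|` A| + h <= size (lines A ord_max) * size (lines A ord0))%N.
Proof.
case=> H [<- [holes_H _]].
rewrite -size_cat -(size_allpairs pair); apply: uniq_leq_size.
  rewrite cat_uniq !fset_uniq andbT /=.
  by apply/hasPn => c /holes_H [].
have in_grid c : (forall d, line_coord d c \in lines A d) ->
    c \in [seq (x, y) | x <- lines A ord_max, y <- lines A ord0].
  move=> on_lines; case: c on_lines => x y on_lines.
  exact: allpairs_f (on_lines ord_max) (on_lines ord0).
move=> c; rewrite mem_cat => /orP [cA | cH]; apply: in_grid => d.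
  exact: mem_lines.
by apply: hole_mem_lines; case: (holes_H c cH).
Qed.

Theorem lemma1 (R : realType) (A : {fset cell}) (n h : nat) :
  polyomino A -> #|` A| = n -> num_holes A h ->
  (2 * Num.ceil (2 * Num.sqrt ((n + h)%:R : R)) <= (outer_perimeter A)%:Z)%R.
Proof.
move=> _ <- /tiles_add_holes_le_grid grid_bound.
apply: le_trans (_ : (2 * (size (lines A ord_max) + size (lines A ord0))%:Z
                      <= _)%R).
  by rewrite ler_pM2l // (ceil_two_sqrt_le_add _ grid_bound).
by rewrite -[2%R]/(2%N : int) -PoszM lez_nat outer_perimeter_ge_lines.
Qed.
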